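(* Let $\mathcal A,\mathcal B$ be categories with equalizers and $(\mathcal T,(N_A,R_A),(N_B,R_B),\tau)$ a regular pre-torsor. Let $(C,i)$ be the equalizer of $\omega^l=(R_AN_BR_BN_AR_A\epsilon^BN_A)\circ(\tau R_BN_A)$ and $\omega^r=R_AN_BR_BN_A\eta^A$, with comonad structure $\Delta^C,\varepsilon^C$ determined by $(ii)\circ\Delta^C=(\tau R_BN_A)\circ i$ (where $ii=(R_AN_BR_BN_Ai)\circ(iC)$) and $\eta^A\circ\varepsilon^C=(R_A\epsilon^BN_A)\circ i$; and let $(D,j)$ be the equalizer of $\theta^l=(R_B\epsilon^AN_BR_BN_AR_AN_B)\circ(R_BN_A\tau)$ and $\theta^r=\eta^BR_BN_AR_AN_B$, with comonad structure given by $(jj)\circ\Delta^D=(R_BN_A\tau)\circ j$ and $\eta^B\circ\varepsilon^D=(R_B\epsilon^AN_B)\circ j$. Then the comonads $\mathbb C=(C,\Delta^C,\varepsilon^C)$ on $\mathcal A$ and $\mathbb D=(D,\Delta^D,\varepsilon^D)$ on $\mathcal B$ have equivalent categories of comodules: $\mathcal A^{\mathbb C}\simeq\mathcal B^{\mathbb D}$.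
   Context: Conventions: $\circ$ vertical composition, juxtaposition horizontal composition; a functor's name denotes its identity transformation. Adjunctions $(N_A:\mathcal A\to\mathcal T,R_A)$ and $(N_B:\mathcal B\to\mathcal T,R_B)$ with units $\eta^A,\eta^B$ and counits $\epsilon^A,\epsilon^B$. A pre-torsor is such a pair of adjunctions together with a natural $\tau:R_AN_B\to R_AN_BR_BN_AR_AN_B$ satisfying $(R_AN_BR_B\epsilon^AN_B)\circ\tau=R_AN_B\eta^B$, $(R_A\epsilon^BN_AR_AN_B)\circ\tau=\eta^AR_AN_B$, $(R_AN_BR_BN_A\tau)\circ\tau=(\tau R_BN_AR_AN_B)\circ\tau$. It is regular if both adjunctions are regular: an adjunction $(N,R)$ out of a category with equalizers is regular if its unit is a regular natural monomorphism (the equalizer in the functor category of some pair of natural transformations) and $N$ preserves equalizers. Equalizers of natural transformations are taken in the functor category. *)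

From Stdlib Require Import ProofIrrelevance.
Set Implicit Arguments.
Unset Strict Implicit.

Record Category := {
  ob :> Type;
  hom : ob -> ob -> Type;
  idm : forall a, hom a a;
  cmp : forall a b c, hom b c -> hom a b -> hom a c;
  cmp_id_l : forall a b (f : hom a b), cmp (idm b) f = f;
  cmp_id_r : forall a b (f : hom a b), cmp f (idm a) = f;
  cmp_assoc : forall a b c d (h : hom c d) (g : hom b c) (f : hom a b),
      cmp h (cmp g f) = cmp (cmp h g) f }.
Arguments hom {c0} a b.
Arguments idm {c0} a.
Arguments cmp {c0 a b c} g f.
Notation "g ∘ f" := (cmp g f) (at level 40, left associativity).

Record Functor (C D : Category) := {
  fobj :> C -> D;
  fmap : forall a b, hom a b -> hom (fobj a) (fobj b);
  fmap_id : forall a, fmap (idm a) = idm (fobj a);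
  fmap_comp : forall a b c (g : hom b c) (f : hom a b),
      fmap (g ∘ f) = fmap g ∘ fmap f }.
Arguments fmap {C D} f0 {a b} _.

Definition Fid (C : Category) : Functor C C.
Proof. refine {| fobj := fun x => x; fmap := fun a b f => f |}; reflexivity. Defined.

Definition Fcomp {C D E : Category} (G : Functor D E) (F : Functor C D) : Functor C E.
Proof.
  refine {| fobj := fun x => G (F x); fmap := fun a b f => fmap G (fmap F f) |}.
  - intro a; rewrite !fmap_id; reflexivity.
  - intros; rewrite !fmap_comp; reflexivity.
Defined.

Record NatTrans {C D : Category} (F G : Functor C D) := {
  ntc :> forall x, hom (F x) (G x);
  ntnat : forall a b (f : hom a b), ntc b ∘ fmap F f = fmap G f ∘ ntc a }.

Definition IsEqualizer {C : Category} {e x y : C} (m : hom e x) (f g : hom x y) : Prop :=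
  f ∘ m = g ∘ m /\
  forall z (k : hom z x), f ∘ k = g ∘ k -> exists! u : hom z e, m ∘ u = k.

Definition HasEqualizers (C : Category) : Prop :=
  forall (x y : C) (f g : hom x y), exists (e : C) (m : hom e x), IsEqualizer m f g.

Definition PreservesEqualizers {C D : Category} (N : Functor C D) : Prop :=
  forall (e x y : C) (m : hom e x) (f g : hom x y),
    IsEqualizer m f g -> IsEqualizer (fmap N m) (fmap N f) (fmap N g).

Definition IsEqualizerNT {C D : Category} {E F G : Functor C D}
  (i : NatTrans E F) (al be : forall x, hom (F x) (G x)) : Prop :=
  (forall x, al x ∘ i x = be x ∘ i x) /\
  forall (X : Functor C D) (k : NatTrans X F),
    (forall x, al x ∘ k x = be x ∘ k x) ->
    exists u : NatTrans X E,
      (forall x, i x ∘ u x = k x) /\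
      (forall u' : NatTrans X E, (forall x, i x ∘ u' x = k x) -> forall x, u' x = u x).

Definition RegularNatMono {C D : Category} {E F : Functor C D} (i : NatTrans E F) : Prop :=
  exists (G : Functor C D) (al be : NatTrans F G), IsEqualizerNT i al be.

Record Adjunction (C D : Category) := {
  adjL : Functor C D;
  adjR : Functor D C;
  unit : NatTrans (Fid C) (Fcomp adjR adjL);
  counit : NatTrans (Fcomp adjL adjR) (Fid D);
  tri_l : forall x : C, counit (adjL x) ∘ fmap adjL (unit x) = idm (adjL x);
  tri_r : forall y : D, fmap adjR (counit y) ∘ unit (adjR y) = idm (adjR y) }.

Definition RegularAdjunction {C D : Category} (adj : Adjunction C D) : Prop :=
  RegularNatMono (unit adj) /\ PreservesEqualizers (adjL adj).

Section Torsor.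
Context {A B T : Category} (adjA : Adjunction A T) (adjB : Adjunction B T).
Local Notation NA := (adjL adjA).
Local Notation RA := (adjR adjA).
Local Notation NB := (adjL adjB).
Local Notation RB := (adjR adjB).
Local Notation etaA := (unit adjA).
Local Notation epsA := (counit adjA).
Local Notation etaB := (unit adjB).
Local Notation epsB := (counit adjB).

Definition PhiA : Functor A A := Fcomp RA (Fcomp NB (Fcomp RB NA)).
Definition PhiB : Functor B B := Fcomp RB (Fcomp NA (Fcomp RA NB)).

Definition TauType : Type :=
  NatTrans (Fcomp RA NB) (Fcomp PhiA (Fcomp RA NB)).

Definition IsPreTorsor (tau : TauType) : Prop :=
  (forall x : B, fmap RA (fmap NB (fmap RB (epsA (NB x)))) ∘ tau x
                 = fmap RA (fmap NB (etaB x))) /\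
  (forall x : B, fmap RA (epsB (NA (RA (NB x)))) ∘ tau x = etaA (RA (NB x))) /\
  (forall x : B, fmap PhiA (tau x) ∘ tau x = tau (RB (NA (RA (NB x)))) ∘ tau x).

Definition IsRegularPreTorsor (tau : TauType) : Prop :=
  IsPreTorsor tau /\ RegularAdjunction adjA /\ RegularAdjunction adjB.

Variable tau : TauType.

Definition omega_l (x : A) : hom (PhiA x) (Fcomp PhiA (Fcomp RA NA) x) :=
  fmap PhiA (fmap RA (epsB (NA x))) ∘ tau (RB (NA x)).
Definition omega_r (x : A) : hom (PhiA x) (Fcomp PhiA (Fcomp RA NA) x) :=
  fmap PhiA (etaA x).

Definition theta_l (x : B) : hom (PhiB x) (Fcomp (Fcomp RB NB) PhiB x) :=
  fmap RB (epsA (NB (PhiB x))) ∘ fmap RB (fmap NA (tau x)).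
Definition theta_r (x : B) : hom (PhiB x) (Fcomp (Fcomp RB NB) PhiB x) :=
  etaB (PhiB x).

Definition ComonadDataC (C : Functor A A) (i : NatTrans C PhiA)
  (DeltaC : NatTrans C (Fcomp C C)) (epsC : NatTrans C (Fid A)) : Prop :=
  (forall x, fmap PhiA (i x) ∘ i (C x) ∘ DeltaC x = tau (RB (NA x)) ∘ i x) /\
  (forall x, etaA x ∘ epsC x = fmap RA (epsB (NA x)) ∘ i x).

Definition ComonadDataD (D : Functor B B) (j : NatTrans D PhiB)
  (DeltaD : NatTrans D (Fcomp D D)) (epsD : NatTrans D (Fid B)) : Prop :=
  (forall x, fmap PhiB (j x) ∘ j (D x) ∘ DeltaD x = fmap RB (fmap NA (tau x)) ∘ j x) /\
  (forall x, etaB x ∘ epsD x = fmap RB (epsA (NB x)) ∘ j x).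
End Torsor.

Section Comodules.
Context {A : Category} (C : Functor A A)
  (Delta : NatTrans C (Fcomp C C)) (eps : NatTrans C (Fid A)).

Record Comodule := {
  cm_ob : A;
  cm_coact : hom cm_ob (C cm_ob);
  cm_coassoc : fmap C cm_coact ∘ cm_coact = Delta cm_ob ∘ cm_coact;
  cm_counit : eps cm_ob ∘ cm_coact = idm cm_ob }.

Definition ComoduleHom (X Y : Comodule) : Type :=
  { f : hom (cm_ob X) (cm_ob Y) | cm_coact Y ∘ f = fmap C f ∘ cm_coact X }.

Lemma comodule_hom_eq (X Y : Comodule) (f g : ComoduleHom X Y) :
  proj1_sig f = proj1_sig g -> f = g.
Proof.
  destruct f as [f pf], g as [g pg]; simpl; intros ->.
  rewrite (proof_irrelevance _ pf pg); reflexivity.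
Qed.

Definition cm_id (X : Comodule) : ComoduleHom X X.
Proof.
  exists (idm (cm_ob X)). rewrite fmap_id, cmp_id_l, cmp_id_r; reflexivity.
Defined.

Definition cm_comp (X Y Z : Comodule) (g : ComoduleHom Y Z) (f : ComoduleHom X Y) :
  ComoduleHom X Z.
Proof.
  exists (proj1_sig g ∘ proj1_sig f).
  destruct g as [g pg], f as [f pf]; simpl.
  rewrite fmap_comp, cmp_assoc, pg, <- cmp_assoc, pf, cmp_assoc; reflexivity.
Defined.

Definition ComoduleCat : Category.
Proof.
  refine {| ob := Comodule; hom := ComoduleHom; idm := cm_id; cmp := cm_comp |}.
  - intros; apply comodule_hom_eq; simpl; apply cmp_id_l.
  - intros; apply comodule_hom_eq; simpl; apply cmp_id_r.
  - intros; apply comodule_hom_eq; simpl; apply cmp_assoc.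
Defined.
End Comodules.

Definition IsIso {C : Category} {a b : C} (f : hom a b) : Prop :=
  exists g : hom b a, g ∘ f = idm a /\ f ∘ g = idm b.

Definition EquivalentCats (C D : Category) : Prop :=
  exists (F : Functor C D) (G : Functor D C)
         (u : NatTrans (Fid C) (Fcomp G F)) (c : NatTrans (Fcomp F G) (Fid D)),
    (forall x, IsIso (u x)) /\ (forall y, IsIso (c y)).

Arguments IsPreTorsor {A B T} adjA adjB tau.
Arguments IsRegularPreTorsor {A B T} adjA adjB tau.
Arguments omega_l {A B T} adjA adjB tau x.
Arguments theta_l {A B T} adjA adjB tau x.
Arguments ComonadDataC {A B T} adjA adjB tau {C} i DeltaC epsC.
Arguments ComonadDataD {A B T} adjA adjB tau {D} j DeltaD epsD.
Arguments ComoduleCat {A} C Delta eps.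

(* By adjunction, a C-comodule structure on X amounts to an N_B R_B-coalgebra structure
   nu on N_A X, and a D-comodule structure on Y to an N_A R_A-coalgebra structure on
   N_B Y; the pre-torsor axioms make these coalgebras coassociative. As N_B preserves
   equalizers, the equalizer Y of R_B nu and eta^B R_B N_A X satisfies N_B Y ~ N_A X, and
   transporting the free coalgebra N_A eta^A X along this isomorphism makes Y a
   D-comodule; symmetrically from D to C. Going there and back gives an isomorphism
   N_A X ~ N_A X'' of free coalgebras, which comes from an isomorphism X ~ X'' because
   eta^A is a regular monomorphism. *)

From Stdlib Require Import ClassicalEpsilon.
Set Implicit Arguments.
Unset Strict Implicit.

Ltac assoc_r := repeat rewrite <- cmp_assoc.
Ltac simpl_id := repeat rewrite fmap_id; repeat rewrite cmp_id_l; repeat rewrite cmp_id_r.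

Section ChainRewrite.
Context {C : Category}.
Lemma chain_rewrite2 {a0 a1 a2 : C} (p : hom a1 a2) (q : hom a0 a1) r :
  p ∘ q = r -> forall e (x : hom e a0), p ∘ (q ∘ x) = r ∘ x.
Proof. intros H e x; rewrite cmp_assoc, H; reflexivity. Qed.
Lemma chain_rewrite3 {a0 a1 a2 a3 : C} (p : hom a2 a3) (q1 : hom a1 a2) (q2 : hom a0 a1) r :
  p ∘ (q1 ∘ q2) = r -> forall e (x : hom e a0), p ∘ (q1 ∘ (q2 ∘ x)) = r ∘ x.
Proof. intros H e x; rewrite !cmp_assoc, <- H, !cmp_assoc; reflexivity. Qed.
Lemma chain_rewrite4 {a0 a1 a2 a3 a4 : C} (p : hom a3 a4) (q1 : hom a2 a3) (q2 : hom a1 a2)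
  (q3 : hom a0 a1) r :
  p ∘ (q1 ∘ (q2 ∘ q3)) = r ->
  forall e (x : hom e a0), p ∘ (q1 ∘ (q2 ∘ (q3 ∘ x))) = r ∘ x.
Proof. intros H e x; rewrite !cmp_assoc, <- H, !cmp_assoc; reflexivity. Qed.
Lemma chain_rewrite5 {a0 a1 a2 a3 a4 a5 : C} (p : hom a4 a5) (q1 : hom a3 a4) (q2 : hom a2 a3)
  (q3 : hom a1 a2) (q4 : hom a0 a1) r :
  p ∘ (q1 ∘ (q2 ∘ (q3 ∘ q4))) = r ->
  forall e (x : hom e a0), p ∘ (q1 ∘ (q2 ∘ (q3 ∘ (q4 ∘ x)))) = r ∘ x.
Proof. intros H e x; rewrite !cmp_assoc, <- H, !cmp_assoc; reflexivity. Qed.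
Lemma chain_rewrite6 {a0 a1 a2 a3 a4 a5 a6 : C} (p : hom a5 a6) (q1 : hom a4 a5)
  (q2 : hom a3 a4) (q3 : hom a2 a3) (q4 : hom a1 a2) (q5 : hom a0 a1) r :
  p ∘ (q1 ∘ (q2 ∘ (q3 ∘ (q4 ∘ q5)))) = r ->
  forall e (x : hom e a0), p ∘ (q1 ∘ (q2 ∘ (q3 ∘ (q4 ∘ (q5 ∘ x))))) = r ∘ x.
Proof. intros H e x; rewrite !cmp_assoc, <- H, !cmp_assoc; reflexivity. Qed.
Lemma chain_rewrite7 {a0 a1 a2 a3 a4 a5 a6 a7 : C} (p : hom a6 a7) (q1 : hom a5 a6)
  (q2 : hom a4 a5) (q3 : hom a3 a4) (q4 : hom a2 a3) (q5 : hom a1 a2) (q6 : hom a0 a1) r :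
  p ∘ (q1 ∘ (q2 ∘ (q3 ∘ (q4 ∘ (q5 ∘ q6))))) = r ->
  forall e (x : hom e a0), p ∘ (q1 ∘ (q2 ∘ (q3 ∘ (q4 ∘ (q5 ∘ (q6 ∘ x)))))) = r ∘ x.
Proof. intros H e x; rewrite !cmp_assoc, <- H, !cmp_assoc; reflexivity. Qed.
End ChainRewrite.

(* [rw H] rewrites with an equation between composites modulo associativity: both
   [H] and the goal are split along [fmap_comp] and reassociated to the right, so
   the left-hand side of [H] may match any contiguous segment of a composite. *)
Ltac rw H :=
  let H0 := fresh in
  pose proof H as H0; cbn in H0; repeat rewrite fmap_comp in H0; repeat rewrite fmap_id in H0;
  repeat rewrite cmp_id_l in H0; repeat rewrite cmp_id_r in H0;
  repeat rewrite <- cmp_assoc in H0;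
  cbn; repeat rewrite fmap_comp; simpl_id; assoc_r;
  first [ rewrite (chain_rewrite7 H0) | rewrite (chain_rewrite6 H0)
        | rewrite (chain_rewrite5 H0) | rewrite (chain_rewrite4 H0)
        | rewrite (chain_rewrite3 H0) | rewrite (chain_rewrite2 H0) | rewrite H0 ];
  clear H0; repeat rewrite fmap_comp; simpl_id; assoc_r.

Definition Mono {C : Category} {a b : C} (f : hom a b) : Prop :=
  forall z (g h : hom z a), f ∘ g = f ∘ h -> g = h.

Lemma linv_mono {C : Category} {a b : C} (f : hom a b) (g : hom b a) :
  g ∘ f = idm a -> Mono f.
Proof.
  intros H z u v E.
  rewrite <- (cmp_id_l u), <- (cmp_id_l v), <- H, <- !cmp_assoc, E; reflexivity.
Qed.

Lemma fmap_linv {C D : Category} (F : Functor C D) {a b : C} (f : hom a b) (g : hom b a) :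
  g ∘ f = idm a -> fmap F g ∘ fmap F f = idm (F a).
Proof. intros H; rewrite <- fmap_comp, H, fmap_id; reflexivity. Qed.

Lemma iso_natural {C : Category} {a a' b b' : C} (p : hom a b) (q : hom b a)
  (p' : hom a' b') (q' : hom b' a') (f : hom a a') (g : hom b b') :
  p ∘ q = idm b -> q' ∘ p' = idm a' -> p' ∘ f = g ∘ p -> f ∘ q = q' ∘ g.
Proof.
  intros Hq Hq' E.
  rewrite <- (cmp_id_l (f ∘ q)), <- Hq'. rw E. rw Hq. reflexivity.
Qed.

Lemma equalizer_mono {C : Category} {e x y : C} (m : hom e x) (f g : hom x y) :
  IsEqualizer m f g -> Mono m.
Proof.
  intros [H1 H2] z a b Hab.
  assert (Hk : f ∘ (m ∘ a) = g ∘ (m ∘ a)) by (rewrite !cmp_assoc, H1; reflexivity).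
  destruct (H2 z _ Hk) as [u [_ Hu]].
  transitivity u; [symmetry|]; apply Hu; auto.
Qed.

Definition eq_lift {C : Category} {e x y z : C} {m : hom e x} {f g : hom x y}
  (H : IsEqualizer m f g) {k : hom z x} (Hk : f ∘ k = g ∘ k) : hom z e :=
  proj1_sig (constructive_definite_description _ (proj2 H z k Hk)).

Lemma eq_lift_spec {C : Category} {e x y z : C} {m : hom e x} {f g : hom x y}
  (H : IsEqualizer m f g) {k : hom z x} (Hk : f ∘ k = g ∘ k) : m ∘ eq_lift H Hk = k.
Proof. unfold eq_lift; destruct (constructive_definite_description _ _); assumption. Qed.

Lemma eq_lift_unique {C : Category} {e x y z : C} {m : hom e x} {f g : hom x y}
  (H : IsEqualizer m f g) {k : hom z x} (Hk : f ∘ k = g ∘ k) (u : hom z e) :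
  m ∘ u = k -> u = eq_lift H Hk.
Proof. intros Hu. apply (equalizer_mono H). rewrite eq_lift_spec; exact Hu. Qed.

Definition choose_equalizer {C : Category} (H : HasEqualizers C) {x y : C} (f g : hom x y) :
  {e : C & {m : hom e x | IsEqualizer m f g}}.
Proof.
  destruct (constructive_indefinite_description _ (H _ _ f g)) as [e He].
  exists e. apply constructive_indefinite_description; exact He.
Defined.

Definition ntid {C D : Category} (F : Functor C D) : NatTrans F F.
Proof.
  refine {| ntc := fun x => idm (F x) |}.
  intros; rewrite cmp_id_l, cmp_id_r; reflexivity.
Defined.

Definition ntcomp {C D : Category} {F G H : Functor C D} (b : NatTrans G H) (a : NatTrans F G) :
  NatTrans F H.
Proof.
  refine {| ntc := fun x => b x ∘ a x |}.
  intros. rewrite <- cmp_assoc, ntnat, cmp_assoc, ntnat, cmp_assoc; reflexivity.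
Defined.

Section PointwiseEqualizer.
Context {C D : Category} (HD : HasEqualizers D) {E F G : Functor C D} (i : NatTrans E F)
  (al be : forall x, hom (F x) (G x))
  (al_nat : forall a b (f : hom a b), al b ∘ fmap F f = fmap G f ∘ al a)
  (be_nat : forall a b (f : hom a b), be b ∘ fmap F f = fmap G f ∘ be a)
  (Hi : IsEqualizerNT i al be).

Let eq_at (x : C) := choose_equalizer HD (al x) (be x).
Let eq_ob x := projT1 (eq_at x).
Let eq_m x : hom (eq_ob x) (F x) := proj1_sig (projT2 (eq_at x)).
Let eq_H x : IsEqualizer (eq_m x) (al x) (be x) := proj2_sig (projT2 (eq_at x)).

Let eq_fmap_ok a b (f : hom a b) :
  al b ∘ (fmap F f ∘ eq_m a) = be b ∘ (fmap F f ∘ eq_m a).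
Proof. rewrite !cmp_assoc, al_nat, be_nat, <- !cmp_assoc, (proj1 (eq_H a)); reflexivity. Qed.

Let eq_functor : Functor C D.
Proof.
  refine {| fobj := eq_ob; fmap := fun a b f => eq_lift (eq_H b) (eq_fmap_ok f) |}.
  - intros a. symmetry. apply eq_lift_unique. simpl_id. reflexivity.
  - intros a b c g f. symmetry. apply eq_lift_unique.
    rewrite cmp_assoc, eq_lift_spec, <- cmp_assoc, eq_lift_spec, fmap_comp, cmp_assoc.
    reflexivity.
Defined.

Let eq_incl : NatTrans eq_functor F.
Proof. refine (@Build_NatTrans C D eq_functor F eq_m _). intros a b f. apply eq_lift_spec. Defined.

Let eq_comparison : NatTrans E eq_functor.
Proof.
  refine (@Build_NatTrans C D E eq_functor (fun x => eq_lift (eq_H x) (proj1 Hi x)) _).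
  intros a b f. apply (equalizer_mono (eq_H b)). cbn.
  rewrite !cmp_assoc, !eq_lift_spec, <- cmp_assoc, eq_lift_spec. apply ntnat.
Defined.

(* Compare [i] with the pointwise equalizer functor through the two universal properties. *)
Lemma equalizerNT_pointwise x : IsEqualizer (i x) (al x) (be x).
Proof.
  destruct Hi as [Hi1 Hi2].
  destruct (Hi2 eq_functor eq_incl (fun x => proj1 (eq_H x))) as [u [Hu _]].
  destruct (Hi2 E i Hi1) as [w [_ Hw]].
  assert (Huv : forall x, u x ∘ eq_comparison x = idm (E x)).
  { intros y. transitivity (w y).
    - apply (Hw (ntcomp u eq_comparison)). intros z. cbn. rewrite cmp_assoc, Hu. apply eq_lift_spec.
    - symmetry. apply (Hw (ntid E)). intros z. apply cmp_id_r. }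
  split; [apply Hi1|].
  intros z k Hk. exists (u x ∘ eq_lift (eq_H x) Hk). split.
  - rewrite cmp_assoc, Hu. apply eq_lift_spec.
  - intros w' Hw'.
    rewrite <- (cmp_id_l w'), <- Huv, <- cmp_assoc. f_equal. symmetry. apply eq_lift_unique.
    rewrite cmp_assoc. cbn. rewrite eq_lift_spec. exact Hw'.
Qed.
End PointwiseEqualizer.

Section AdjunctionFacts.
Context {C D : Category} (adj : Adjunction C D).
Local Notation N := (adjL adj).
Local Notation R := (adjR adj).
Local Notation η := (unit adj).
Local Notation ε := (counit adj).

Lemma unit_nat a b (f : hom a b) : η b ∘ f = fmap R (fmap N f) ∘ η a.
Proof. exact (ntnat η f). Qed.
Lemma counit_nat a b (f : hom a b) : ε b ∘ fmap N (fmap R f) = f ∘ ε a.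
Proof. exact (ntnat ε f). Qed.
Lemma triangle_l x : ε (N x) ∘ fmap N (η x) = idm (N x).
Proof. exact (tri_l adj x). Qed.
Lemma triangle_r y : fmap R (ε y) ∘ η (R y) = idm (R y).
Proof. exact (tri_r adj y). Qed.

Definition adj_lift {x : C} {y : D} (f : hom (N x) y) : hom x (R y) := fmap R f ∘ η x.
Definition adj_drop {x : C} {y : D} (g : hom x (R y)) : hom (N x) y := ε y ∘ fmap N g.

Lemma adj_lift_drop x y (g : hom x (R y)) : adj_lift (adj_drop g) = g.
Proof. unfold adj_lift, adj_drop. rw (eq_sym (unit_nat g)). rw (triangle_r y). reflexivity. Qed.

Lemma adj_drop_lift x y (f : hom (N x) y) : adj_drop (adj_lift f) = f.
Proof. unfold adj_lift, adj_drop. rw (counit_nat f). rw (triangle_l x). reflexivity. Qed.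

Lemma adj_drop_natural x y y' (f : hom y y') (g : hom x (R y)) :
  adj_drop (fmap R f ∘ g) = f ∘ adj_drop g.
Proof. unfold adj_drop. rw (counit_nat f). reflexivity. Qed.

Lemma adj_lift_precomp x x' y (f : hom (N x') y) (h : hom x x') :
  adj_lift f ∘ h = adj_lift (f ∘ fmap N h).
Proof. unfold adj_lift. rw (unit_nat h). reflexivity. Qed.

Lemma adj_lift_postcomp x y y' (f : hom (N x) y) (g : hom y y') :
  fmap R g ∘ adj_lift f = adj_lift (g ∘ f).
Proof. unfold adj_lift. rewrite fmap_comp, cmp_assoc. reflexivity. Qed.

Lemma adj_lift_inj x y (f g : hom (N x) y) : adj_lift f = adj_lift g -> f = g.
Proof. intros H. rewrite <- (adj_drop_lift f), <- (adj_drop_lift g), H. reflexivity. Qed.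

Lemma R_mono y y' (f : hom y y') : Mono f -> Mono (fmap R f).
Proof.
  intros Hf z a b H.
  rewrite <- (adj_lift_drop a), <- (adj_lift_drop b). f_equal.
  apply Hf. rewrite <- !adj_drop_natural, H. reflexivity.
Qed.

Lemma R_equalizer (e x y : D) (m : hom e x) (f g : hom x y) :
  IsEqualizer m f g -> IsEqualizer (fmap R m) (fmap R f) (fmap R g).
Proof.
  intros Hm. pose proof (equalizer_mono Hm) as Mm. destruct Hm as [H1 H2]. split.
  - rewrite <- !fmap_comp, H1; reflexivity.
  - intros z k Hk.
    assert (Hk' : f ∘ adj_drop k = g ∘ adj_drop k).
    { rewrite <- !adj_drop_natural, Hk; reflexivity. }
    destruct (H2 _ _ Hk') as [u [Hu _]].
    assert (E : fmap R m ∘ adj_lift u = k).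
    { unfold adj_lift. rewrite cmp_assoc, <- fmap_comp, Hu. apply adj_lift_drop. }
    exists (adj_lift u). split; auto.
    intros u' Hu'. apply (R_mono Mm). rewrite Hu'; exact E.
Qed.
End AdjunctionFacts.

Section Coalgebras.
Context {C D : Category} (adj : Adjunction C D).
Local Notation N := (adjL adj).
Local Notation R := (adjR adj).
Local Notation η := (unit adj).
Local Notation ε := (counit adj).

Definition IsCoalgebra {z : D} (ζ : hom z (N (R z))) : Prop :=
  ε z ∘ ζ = idm z /\ fmap N (fmap R ζ) ∘ ζ = fmap N (η (R z)) ∘ ζ.

Definition IsCoalgHom {z z' : D} (ζ : hom z (N (R z))) (ζ' : hom z' (N (R z'))) (h : hom z z') :
  Prop := ζ' ∘ h = fmap N (fmap R h) ∘ ζ.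

Lemma coalg_hom_comp {z1 z2 z3 : D} (ζ1 : hom z1 (N (R z1))) (ζ2 : hom z2 (N (R z2)))
  (ζ3 : hom z3 (N (R z3))) (h : hom z1 z2) (h' : hom z2 z3) :
  IsCoalgHom ζ1 ζ2 h -> IsCoalgHom ζ2 ζ3 h' -> IsCoalgHom ζ1 ζ3 (h' ∘ h).
Proof. unfold IsCoalgHom; intros H H'. rw H'. rw H. reflexivity. Qed.

Lemma coalg_hom_inv {z z' : D} (ζ : hom z (N (R z))) (ζ' : hom z' (N (R z')))
  (h : hom z z') (g : hom z' z) :
  g ∘ h = idm z -> h ∘ g = idm z' -> IsCoalgHom ζ ζ' h -> IsCoalgHom ζ' ζ g.
Proof.
  unfold IsCoalgHom; intros Hgh Hhg H.
  apply (iso_natural Hhg (fmap_linv N (fmap_linv R Hgh))). exact (eq_sym H).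
Qed.

Lemma free_coalgebra x : IsCoalgebra (fmap N (η x)).
Proof.
  split; [apply (triangle_l adj)|].
  rewrite <- !fmap_comp. f_equal. symmetry. exact (unit_nat adj (η x)).
Qed.

Lemma free_coalg_hom a b (f : hom a b) :
  IsCoalgHom (fmap N (η a)) (fmap N (η b)) (fmap N f).
Proof. unfold IsCoalgHom. rewrite <- !fmap_comp. f_equal. exact (unit_nat adj f). Qed.

Definition transport {z z' : D} (h : hom z z') (g : hom z' z) (ζ' : hom z' (N (R z'))) :
  hom z (N (R z)) := fmap N (fmap R g) ∘ ζ' ∘ h.

Section Transport.
Context {z z' : D} (h : hom z z') (g : hom z' z) (Hgh : g ∘ h = idm z) (Hhg : h ∘ g = idm z')
  (ζ' : hom z' (N (R z'))).

Lemma transport_coalgebra : IsCoalgebra ζ' -> IsCoalgebra (transport h g ζ').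
Proof.
  unfold transport; intros [Hcu Hca]; split.
  - rw (counit_nat adj g). rw Hcu. exact Hgh.
  - rw (fmap_linv N (fmap_linv R Hhg)). rw Hca.
    rw (f_equal (fmap N) (unit_nat adj (fmap R g))). reflexivity.
Qed.

Lemma transport_hom : IsCoalgHom (transport h g ζ') ζ' h.
Proof. unfold IsCoalgHom, transport. rw (fmap_linv N (fmap_linv R Hhg)). reflexivity. Qed.
End Transport.

Lemma transport_natural {z1 z1' z2 z2' : D} (h1 : hom z1 z1') (g1 : hom z1' z1)
  (h2 : hom z2 z2') (g2 : hom z2' z2) (ζ1 : hom z1' (N (R z1'))) (ζ2 : hom z2' (N (R z2')))
  (k : hom z1 z2) (k' : hom z1' z2') :
  h1 ∘ g1 = idm z1' -> g2 ∘ h2 = idm z2 -> h2 ∘ k = k' ∘ h1 -> IsCoalgHom ζ1 ζ2 k' ->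
  IsCoalgHom (transport h1 g1 ζ1) (transport h2 g2 ζ2) k.
Proof.
  unfold IsCoalgHom, transport; intros Hhg1 Hgh2 Hk Hk'.
  pose proof (iso_natural Hhg1 Hgh2 Hk) as Hkg.
  rw Hk. rw Hk'. rw (f_equal (fun u => fmap N (fmap R u)) Hkg). reflexivity.
Qed.

(* Descent: when [N] preserves equalizers, every [N R]-coalgebra [ζ] on [z] is
   isomorphic to [N x], for [x] the equalizer of [R ζ] and [η (R z)]. *)
Section Descent.
Context (Np : PreservesEqualizers N) {z : D} (ζ : hom z (N (R z))) (Hζ : IsCoalgebra ζ)
  {x : C} (m : hom x (R z)) (Hm : IsEqualizer m (fmap R ζ) (η (R z))).

Definition descent_iso : hom (N x) z := adj_drop m.
Definition descent_inv : hom z (N x) := eq_lift (Np Hm) (proj2 Hζ).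

Lemma fmap_descent_eq : fmap N m = ζ ∘ descent_iso.
Proof.
  unfold descent_iso, adj_drop. rw (eq_sym (counit_nat adj ζ)).
  rewrite <- fmap_comp, (proj1 Hm), fmap_comp. rw (triangle_l adj (R z)). reflexivity.
Qed.

Lemma descent_iso_inv : descent_iso ∘ descent_inv = idm z.
Proof.
  unfold descent_iso, descent_inv, adj_drop. rw (eq_lift_spec (Np Hm) (proj2 Hζ)).
  exact (proj1 Hζ).
Qed.

Lemma descent_inv_iso : descent_inv ∘ descent_iso = idm (N x).
Proof.
  apply (equalizer_mono (Np Hm)). unfold descent_inv.
  rw (eq_lift_spec (Np Hm) (proj2 Hζ)). symmetry; apply fmap_descent_eq.
Qed.

Lemma descent_iso_hom : IsCoalgHom (fmap N (η x)) ζ descent_iso.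
Proof.
  unfold IsCoalgHom. rewrite <- fmap_comp.
  transitivity (fmap N m); [symmetry; apply fmap_descent_eq|].
  f_equal. symmetry. apply (adj_lift_drop m).
Qed.
End Descent.

Section DescentMap.
Context {z z' : D} (ζ : hom z (N (R z))) (ζ' : hom z' (N (R z')))
  {x x' : C} (m : hom x (R z)) (m' : hom x' (R z'))
  (Hm : IsEqualizer m (fmap R ζ) (η (R z))) (Hm' : IsEqualizer m' (fmap R ζ') (η (R z')))
  (h : hom z z') (Hh : IsCoalgHom ζ ζ' h).

Lemma descent_map_ok : fmap R ζ' ∘ (fmap R h ∘ m) = η (R z') ∘ (fmap R h ∘ m).
Proof.
  rw (f_equal (fmap R) Hh). rw (proj1 Hm). rw (eq_sym (unit_nat adj (fmap R h))). reflexivity.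
Qed.

Definition descent_map : hom x x' := eq_lift Hm' descent_map_ok.

Lemma descent_map_spec : m' ∘ descent_map = fmap R h ∘ m.
Proof. apply eq_lift_spec. Qed.

Lemma descent_map_unique u : m' ∘ u = fmap R h ∘ m -> u = descent_map.
Proof. apply eq_lift_unique. Qed.

Lemma descent_iso_natural : descent_iso m' ∘ fmap N descent_map = h ∘ descent_iso m.
Proof.
  unfold descent_iso, adj_drop. rw (f_equal (fmap N) descent_map_spec).
  rw (counit_nat adj h). reflexivity.
Qed.
End DescentMap.
End Coalgebras.

Section RegularUnit.
Context {C D : Category} (adj : Adjunction C D) (HC : HasEqualizers C)
  (Hr : RegularNatMono (unit adj)).
Local Notation N := (adjL adj).
Local Notation R := (adjR adj).
Local Notation η := (unit adj).

Lemma unit_mono x : Mono (η x).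
Proof.
  destruct Hr as [G [al [be H]]].
  exact (equalizer_mono (equalizerNT_pointwise HC (ntnat al) (ntnat be) H x)).
Qed.

Lemma unit_equalizer x : IsEqualizer (η x) (fmap R (fmap N (η x))) (η (R (N x))).
Proof.
  destruct Hr as [G [al [be H]]].
  pose proof (equalizerNT_pointwise HC (ntnat al) (ntnat be) H x) as Hx. split.
  - symmetry. apply unit_nat.
  - intros z k Hk.
    assert (E : al x ∘ k = be x ∘ k).
    { apply (@unit_mono (G x)).
      rw (unit_nat adj (al x)). rw (unit_nat adj (be x)). cbn in Hk. rewrite <- Hk.
      rw (f_equal (fmap R) (f_equal (fmap N) (proj1 Hx))). reflexivity. }
    exists (eq_lift Hx E). split; [apply eq_lift_spec|].
    intros u Hu. apply (@unit_mono x). rewrite eq_lift_spec; auto.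
Qed.

Lemma N_faithful a b (f g : hom a b) : fmap N f = fmap N g -> f = g.
Proof. intros H. apply unit_mono. rewrite !unit_nat, H. reflexivity. Qed.

(* The comparison functor of a regular adjunction is full. *)
Section Descend.
Context {x x' : C} (χ : hom (N x) (N x'))
  (Hχ : IsCoalgHom (fmap N (η x)) (fmap N (η x')) χ).

Lemma descend_ok :
  fmap R (fmap N (η x')) ∘ adj_lift χ = η (R (N x')) ∘ adj_lift χ.
Proof.
  unfold adj_lift. rw (f_equal (fmap R) Hχ).
  rw (eq_sym (unit_nat adj (η x))). rw (eq_sym (unit_nat adj (fmap R χ))). reflexivity.
Qed.

Definition descend : hom x x' := eq_lift (unit_equalizer x') descend_ok.

Lemma fmap_descend : fmap N descend = χ.
Proof.
  transitivity (adj_drop (η x' ∘ descend)).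
  - unfold adj_drop. rw (triangle_l adj x'). reflexivity.
  - unfold descend. rewrite eq_lift_spec. apply adj_drop_lift.
Qed.
End Descend.
End RegularUnit.

Section Transfer.
Context {C1 C2 T : Category} (adj1 : Adjunction C1 T) (adj2 : Adjunction C2 T).
Local Notation N1 := (adjL adj1).
Local Notation R1 := (adjR adj1).
Local Notation η1 := (unit adj1).
Local Notation N2 := (adjL adj2).
Local Notation R2 := (adjR adj2).
Local Notation η2 := (unit adj2).

Lemma coalg_hom_lift {x x' : C1} (ν : hom (N1 x) (N2 (R2 (N1 x))))
  (ν' : hom (N1 x') (N2 (R2 (N1 x')))) (f : hom x x') :
  IsCoalgHom ν ν' (fmap N1 f) <->
  adj_lift ν' ∘ f = fmap R1 (fmap N2 (fmap R2 (fmap N1 f))) ∘ adj_lift ν.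
Proof.
  unfold IsCoalgHom. rewrite adj_lift_precomp, adj_lift_postcomp.
  split; [intros ->; reflexivity | apply adj_lift_inj].
Qed.

Lemma lift_coalg_counit {y : C2} (μ : hom (N2 y) (N1 (R1 (N2 y)))) :
  IsCoalgebra μ -> fmap R2 (counit adj1 (N2 y)) ∘ adj_lift μ = η2 y.
Proof. intros [Hcu _]. unfold adj_lift. rw (f_equal (fmap R2) Hcu). reflexivity. Qed.

(* Both functors of the equivalence are instances of [transfer]: an [N2 R2]-coalgebra
   [ν] on [N1 x] descends to [transfer_ob ν] in [C2], and the free [N1 R1]-coalgebra on
   [x] is carried along [transfer_iso] to an [N1 R1]-coalgebra on its image under [N2]. *)
Context (HeqC2 : HasEqualizers C2) (Np2 : PreservesEqualizers N2).

Section TransferOb.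
Context {x : C1} (ν : hom (N1 x) (N2 (R2 (N1 x)))) (Hν : IsCoalgebra ν).

Definition transfer_ob : C2 := projT1 (choose_equalizer HeqC2 (fmap R2 ν) (η2 (R2 (N1 x)))).

Definition transfer_eq : hom transfer_ob (R2 (N1 x)) :=
  proj1_sig (projT2 (choose_equalizer HeqC2 (fmap R2 ν) (η2 (R2 (N1 x))))).

Lemma transfer_eq_spec : IsEqualizer transfer_eq (fmap R2 ν) (η2 (R2 (N1 x))).
Proof. exact (proj2_sig (projT2 (choose_equalizer HeqC2 (fmap R2 ν) (η2 (R2 (N1 x)))))). Qed.

Definition transfer_iso : hom (N2 transfer_ob) (N1 x) := descent_iso transfer_eq.
Definition transfer_inv : hom (N1 x) (N2 transfer_ob) := descent_inv Np2 Hν transfer_eq_spec.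

Lemma transfer_iso_inv : transfer_iso ∘ transfer_inv = idm (N1 x).
Proof. apply descent_iso_inv. Qed.
Lemma transfer_inv_iso : transfer_inv ∘ transfer_iso = idm (N2 transfer_ob).
Proof. apply descent_inv_iso. Qed.

Definition transfer_coalg : hom (N2 transfer_ob) (N1 (R1 (N2 transfer_ob))) :=
  transport transfer_iso transfer_inv (fmap N1 (η1 x)).

Lemma transfer_coalgebra : IsCoalgebra transfer_coalg.
Proof.
  apply (transport_coalgebra transfer_inv_iso transfer_iso_inv). apply free_coalgebra.
Qed.

Lemma transfer_iso_hom1 : IsCoalgHom transfer_coalg (fmap N1 (η1 x)) transfer_iso.
Proof. exact (transport_hom transfer_iso_inv _). Qed.

Lemma transfer_iso_hom2 : IsCoalgHom (fmap N2 (η2 transfer_ob)) ν transfer_iso.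
Proof. exact (descent_iso_hom transfer_eq_spec). Qed.

Lemma fmap_transfer_eq : fmap N2 transfer_eq = ν ∘ transfer_iso.
Proof. exact (fmap_descent_eq transfer_eq_spec). Qed.

Lemma lift_transfer_coalg :
  fmap R2 (fmap N1 (fmap R1 transfer_iso)) ∘ adj_lift transfer_coalg
  = fmap R2 (fmap N1 (η1 x)) ∘ transfer_eq.
Proof.
  rewrite adj_lift_postcomp, <- transfer_iso_hom1, <- adj_lift_postcomp.
  f_equal. apply (adj_lift_drop transfer_eq).
Qed.

Lemma lift_transfer_coalg_eq :
  fmap R2 (fmap N1 (fmap R1 (fmap N2 transfer_eq))) ∘ adj_lift transfer_coalg
  = fmap R2 (fmap N1 (adj_lift ν)) ∘ transfer_eq.
Proof.
  rewrite fmap_transfer_eq. rw lift_transfer_coalg.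
  unfold adj_lift. rewrite !fmap_comp. assoc_r. reflexivity.
Qed.
End TransferOb.

Section TransferMap.
Context {x x' : C1} (ν : hom (N1 x) (N2 (R2 (N1 x)))) (ν' : hom (N1 x') (N2 (R2 (N1 x'))))
  (Hν : IsCoalgebra ν) (Hν' : IsCoalgebra ν') (f : hom x x')
  (Hf : IsCoalgHom ν ν' (fmap N1 f)).

Definition transfer_map : hom (transfer_ob ν) (transfer_ob ν') :=
  descent_map (transfer_eq_spec ν) (transfer_eq_spec ν') Hf.

Lemma transfer_map_spec :
  transfer_eq ν' ∘ transfer_map = fmap R2 (fmap N1 f) ∘ transfer_eq ν.
Proof. apply descent_map_spec. Qed.

Lemma transfer_iso_natural :
  transfer_iso ν' ∘ fmap N2 transfer_map = fmap N1 f ∘ transfer_iso ν.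
Proof. apply descent_iso_natural. Qed.

Lemma transfer_map_hom :
  IsCoalgHom (transfer_coalg Hν) (transfer_coalg Hν') (fmap N2 transfer_map).
Proof.
  apply (transport_natural (transfer_iso_inv Hν) (transfer_inv_iso Hν') transfer_iso_natural).
  apply free_coalg_hom.
Qed.
End TransferMap.

Lemma transfer_map_id {x : C1} (ν : hom (N1 x) (N2 (R2 (N1 x))))
  (H : IsCoalgHom ν ν (fmap N1 (idm x))) :
  transfer_map H = idm (transfer_ob ν).
Proof. symmetry. apply descent_map_unique. simpl_id. reflexivity. Qed.

Lemma transfer_map_comp {x1 x2 x3 : C1} (ν1 : hom (N1 x1) (N2 (R2 (N1 x1))))
  (ν2 : hom (N1 x2) (N2 (R2 (N1 x2)))) (ν3 : hom (N1 x3) (N2 (R2 (N1 x3))))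
  (f : hom x1 x2) (g : hom x2 x3) (Hf : IsCoalgHom ν1 ν2 (fmap N1 f))
  (Hg : IsCoalgHom ν2 ν3 (fmap N1 g)) (Hgf : IsCoalgHom ν1 ν3 (fmap N1 (g ∘ f))) :
  transfer_map Hgf = transfer_map Hg ∘ transfer_map Hf.
Proof.
  symmetry. apply descent_map_unique.
  rw (transfer_map_spec Hg). rw (transfer_map_spec Hf). reflexivity.
Qed.
End Transfer.

Section RoundTrip.
Context {C1 C2 T : Category} (adj1 : Adjunction C1 T) (adj2 : Adjunction C2 T)
  (HeqC1 : HasEqualizers C1) (HeqC2 : HasEqualizers C2)
  (Np1 : PreservesEqualizers (adjL adj1)) (Np2 : PreservesEqualizers (adjL adj2))
  (Hr1 : RegularNatMono (unit adj1)).
Local Notation N1 := (adjL adj1).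
Local Notation R1 := (adjR adj1).
Local Notation η1 := (unit adj1).
Local Notation N2 := (adjL adj2).
Local Notation R2 := (adjR adj2).

(* Transferring twice gives an isomorphism [N1 x ≅ N1 z] of free coalgebras, which
   descends to [C1]. *)
Section Iso.
Context {x : C1} (ν : hom (N1 x) (N2 (R2 (N1 x)))) (Hν : IsCoalgebra ν)
  (μ : hom (N2 (transfer_ob HeqC2 ν)) (N1 (R1 (N2 (transfer_ob HeqC2 ν)))))
  (Hμ : IsCoalgebra μ) (Eμ : μ = transfer_coalg HeqC2 Np2 Hν).
Local Notation y := (transfer_ob HeqC2 ν).
Local Notation z := (transfer_ob HeqC1 μ).
Local Notation ψ := (transfer_iso HeqC2 ν).
Local Notation φ := (transfer_inv HeqC2 Np2 Hν).
Local Notation ψ' := (transfer_iso HeqC1 μ).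
Local Notation φ' := (transfer_inv HeqC1 Np1 Hμ).

Lemma round_trip_ok : IsCoalgHom (fmap N1 (η1 x)) (fmap N1 (η1 z)) (φ' ∘ φ).
Proof.
  apply (coalg_hom_comp (ζ2 := μ)).
  - subst μ. apply (coalg_hom_inv (transfer_inv_iso _ _ _) (transfer_iso_inv _ _ _)).
    apply transfer_iso_hom1.
  - apply (coalg_hom_inv (transfer_inv_iso _ _ _) (transfer_iso_inv _ _ _)).
    apply transfer_iso_hom2.
Qed.

Lemma round_trip_inv_ok : IsCoalgHom (fmap N1 (η1 z)) (fmap N1 (η1 x)) (ψ ∘ ψ').
Proof.
  apply (coalg_hom_comp (ζ2 := μ)).
  - apply transfer_iso_hom2.
  - subst μ. apply transfer_iso_hom1.
Qed.

Definition round_trip : hom x z := descend HeqC1 Hr1 round_trip_ok.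
Definition round_trip_inv : hom z x := descend HeqC1 Hr1 round_trip_inv_ok.

Lemma round_trip_inv_l : round_trip_inv ∘ round_trip = idm x.
Proof.
  apply (N_faithful HeqC1 Hr1). unfold round_trip, round_trip_inv.
  rewrite fmap_comp, !fmap_descend, fmap_id.
  rw (transfer_iso_inv HeqC1 Np1 Hμ). apply transfer_iso_inv.
Qed.

Lemma round_trip_inv_r : round_trip ∘ round_trip_inv = idm z.
Proof.
  apply (N_faithful HeqC1 Hr1). unfold round_trip, round_trip_inv.
  rewrite fmap_comp, !fmap_descend, fmap_id.
  rw (transfer_inv_iso HeqC2 Np2 Hν). apply transfer_inv_iso.
Qed.

Lemma round_trip_hom : IsCoalgHom ν (transfer_coalg HeqC1 Np1 Hμ) (fmap N1 round_trip).
Proof.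
  unfold round_trip. rewrite fmap_descend.
  apply (coalg_hom_comp (ζ2 := fmap N2 (unit adj2 y))).
  - apply (coalg_hom_inv (transfer_inv_iso _ _ _) (transfer_iso_inv _ _ _)).
    apply transfer_iso_hom2.
  - apply (coalg_hom_inv (transfer_inv_iso _ _ _) (transfer_iso_inv _ _ _)).
    apply transfer_iso_hom1.
Qed.
End Iso.

Lemma round_trip_natural {x x' : C1} (ν : hom (N1 x) (N2 (R2 (N1 x))))
  (ν' : hom (N1 x') (N2 (R2 (N1 x')))) (Hν : IsCoalgebra ν) (Hν' : IsCoalgebra ν')
  (μ : hom (N2 (transfer_ob HeqC2 ν)) (N1 (R1 (N2 (transfer_ob HeqC2 ν)))))
  (μ' : hom (N2 (transfer_ob HeqC2 ν')) (N1 (R1 (N2 (transfer_ob HeqC2 ν')))))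
  (Hμ : IsCoalgebra μ) (Hμ' : IsCoalgebra μ')
  (Eμ : μ = transfer_coalg HeqC2 Np2 Hν) (Eμ' : μ' = transfer_coalg HeqC2 Np2 Hν')
  (f : hom x x') (Hf : IsCoalgHom ν ν' (fmap N1 f))
  (Hg : IsCoalgHom μ μ' (fmap N2 (transfer_map HeqC2 Hf))) :
  transfer_map HeqC1 Hg ∘ round_trip Hμ Eμ = round_trip Hμ' Eμ' ∘ f.
Proof.
  apply (N_faithful HeqC1 Hr1). unfold round_trip. rewrite !fmap_comp, !fmap_descend.
  rw (iso_natural (transfer_iso_inv HeqC1 Np1 Hμ) (transfer_inv_iso HeqC1 Np1 Hμ')
        (transfer_iso_natural HeqC1 Hg)).
  rw (iso_natural (transfer_iso_inv HeqC2 Np2 Hν) (transfer_inv_iso HeqC2 Np2 Hν')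
        (transfer_iso_natural HeqC2 Hf)).
  reflexivity.
Qed.
End RoundTrip.

Lemma comodule_hom_inv {X : Category} {K : Functor X X} {Delta : NatTrans K (Fcomp K K)}
  {eps : NatTrans K (Fid X)} (M M' : Comodule Delta eps) (f : hom (cm_ob M) (cm_ob M'))
  (g : hom (cm_ob M') (cm_ob M)) :
  g ∘ f = idm _ -> f ∘ g = idm _ ->
  cm_coact M' ∘ f = fmap K f ∘ cm_coact M -> cm_coact M ∘ g = fmap K g ∘ cm_coact M'.
Proof. intros Hgf Hfg Hf. exact (iso_natural Hfg (fmap_linv K Hgf) (eq_sym Hf)). Qed.

(* The common shape of [C] inside [R_A N_B R_B N_A] and of [D] inside [R_B N_A R_A N_B]:
   comodules are handled through their composite [p_coact] with the embedding [i]. *)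
Section EmbeddedComonad.
Context {X : Category} {K P : Functor X X} (Delta : NatTrans K (Fcomp K K))
  (eps : NatTrans K (Fid X)) (i : NatTrans K P) {E : X -> X}
  (delta : forall x, hom (P x) (P (P x))) (e : forall x, hom x (E x))
  (gamma : forall x, hom (P x) (E x))
  (i_mono : forall x, Mono (i x)) (Pi_mono : forall x, Mono (fmap P (i x)))
  (e_mono : forall x, Mono (e x))
  (Delta_spec : forall x, fmap P (i x) ∘ i (K x) ∘ Delta x = delta x ∘ i x)
  (eps_spec : forall x, e x ∘ eps x = gamma x ∘ i x).

Definition p_coact (M : Comodule Delta eps) : hom (cm_ob M) (P (cm_ob M)) :=
  i (cm_ob M) ∘ cm_coact M.

Lemma p_coact_counit M : gamma (cm_ob M) ∘ p_coact M = e (cm_ob M).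
Proof.
  unfold p_coact. rw (eq_sym (eps_spec (cm_ob M))). rw (cm_counit M). reflexivity.
Qed.

Lemma p_coact_coassoc M : delta (cm_ob M) ∘ p_coact M = fmap P (p_coact M) ∘ p_coact M.
Proof.
  unfold p_coact. rw (eq_sym (Delta_spec (cm_ob M))). rw (eq_sym (cm_coassoc M)).
  rw (ntnat i (cm_coact M)). reflexivity.
Qed.

Lemma p_coact_hom (M M' : Comodule Delta eps) (f : ComoduleHom M M') :
  p_coact M' ∘ proj1_sig f = fmap P (proj1_sig f) ∘ p_coact M.
Proof. unfold p_coact. destruct f as [f Hf]; cbn. rw Hf. rw (ntnat i f). reflexivity. Qed.

Lemma comodule_hom_of (M M' : Comodule Delta eps) (f : hom (cm_ob M) (cm_ob M')) :
  p_coact M' ∘ f = fmap P f ∘ p_coact M -> cm_coact M' ∘ f = fmap K f ∘ cm_coact M.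
Proof. unfold p_coact; intros Hf. apply i_mono. rw Hf. rw (ntnat i f). reflexivity. Qed.

Section Of.
Context {x : X} (r : hom x (P x)) (k : hom x (K x)) (Hk : i x ∘ k = r)
  (Hcu : gamma x ∘ r = e x) (Hca : delta x ∘ r = fmap P r ∘ r).

Lemma comodule_of_coassoc : fmap K k ∘ k = Delta x ∘ k.
Proof.
  apply i_mono. apply Pi_mono.
  rw (ntnat i k). rw (f_equal (fmap P) Hk). rw Hk.
  rw (Delta_spec x). rw Hk. symmetry; exact Hca.
Qed.

Lemma comodule_of_counit : eps x ∘ k = idm x.
Proof. apply e_mono. rw (eps_spec x). rw Hk. exact Hcu. Qed.

Definition comodule_of : Comodule Delta eps :=
  Build_Comodule comodule_of_coassoc comodule_of_counit.

End Of.
End EmbeddedComonad.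

Section ComodulesOfPreTorsor.
Context (A B T : Category) (HeqA : HasEqualizers A) (HeqB : HasEqualizers B)
  (adjA : Adjunction A T) (adjB : Adjunction B T)
  (tau : TauType adjA adjB) (Htau : IsRegularPreTorsor adjA adjB tau)
  (C : Functor A A) (i : NatTrans C (PhiA adjA adjB))
  (Hi : IsEqualizerNT i (omega_l adjA adjB tau) (omega_r adjA adjB))
  (DeltaC : NatTrans C (Fcomp C C)) (epsC : NatTrans C (Fid A))
  (HC : ComonadDataC adjA adjB tau i DeltaC epsC)
  (D : Functor B B) (j : NatTrans D (PhiB adjA adjB))
  (Hj : IsEqualizerNT j (theta_l adjA adjB tau) (theta_r adjA adjB))
  (DeltaD : NatTrans D (Fcomp D D)) (epsD : NatTrans D (Fid B))
  (HD : ComonadDataD adjA adjB tau j DeltaD epsD).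

Local Notation NA := (adjL adjA).
Local Notation RA := (adjR adjA).
Local Notation NB := (adjL adjB).
Local Notation RB := (adjR adjB).
Local Notation etaA := (unit adjA).
Local Notation epsA := (counit adjA).
Local Notation etaB := (unit adjB).
Local Notation epsB := (counit adjB).
Local Notation PA := (PhiA adjA adjB).
Local Notation PB := (PhiB adjA adjB).

Lemma tau_epsA y :
  fmap RA (fmap NB (fmap RB (epsA (NB y)))) ∘ tau y = fmap RA (fmap NB (etaB y)).
Proof. exact (proj1 (proj1 Htau) y). Qed.
Lemma tau_epsB y : fmap RA (epsB (NA (RA (NB y)))) ∘ tau y = etaA (RA (NB y)).
Proof. exact (proj1 (proj2 (proj1 Htau)) y). Qed.
Lemma tau_nat a b (f : hom a b) :
  tau b ∘ fmap RA (fmap NB f) = fmap PA (fmap RA (fmap NB f)) ∘ tau a.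
Proof. exact (ntnat tau f). Qed.

Lemma regA : RegularNatMono etaA.
Proof. exact (proj1 (proj1 (proj2 Htau))). Qed.
Lemma regB : RegularNatMono etaB.
Proof. exact (proj1 (proj2 (proj2 Htau))). Qed.
Lemma NA_pres : PreservesEqualizers NA.
Proof. exact (proj2 (proj1 (proj2 Htau))). Qed.
Lemma NB_pres : PreservesEqualizers NB.
Proof. exact (proj2 (proj2 (proj2 Htau))). Qed.

Lemma i_equalizer x : IsEqualizer (i x) (omega_l adjA adjB tau x) (omega_r adjA adjB x).
Proof.
  apply (equalizerNT_pointwise HeqA); [| |exact Hi]; intros a b f; unfold omega_l, omega_r.
  - rw (tau_nat (fmap RB (fmap NA f))).
    rw (f_equal (fun g => fmap PA (fmap RA g)) (counit_nat adjB (fmap NA f))). reflexivity.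
  - rw (f_equal (fmap PA) (unit_nat adjA f)). reflexivity.
Qed.

Lemma j_equalizer y : IsEqualizer (j y) (theta_l adjA adjB tau y) (theta_r adjA adjB y).
Proof.
  apply (equalizerNT_pointwise HeqB); [| |exact Hj]; intros a b f; unfold theta_l, theta_r.
  - rw (f_equal (fun g => fmap RB (fmap NA g)) (tau_nat f)).
    rw (f_equal (fmap RB) (counit_nat adjA (fmap NB (fmap PB f)))). reflexivity.
  - rw (unit_nat adjB (fmap PB f)). reflexivity.
Qed.

Lemma i_mono x : Mono (i x).
Proof. exact (equalizer_mono (i_equalizer x)). Qed.
Lemma j_mono y : Mono (j y).
Proof. exact (equalizer_mono (j_equalizer y)). Qed.
Lemma PA_i_mono x : Mono (fmap PA (i x)).
Proof.
  exact (equalizer_mono (R_equalizer adjA (NB_pres (R_equalizer adjB (NA_pres (i_equalizer x)))))).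
Qed.
Lemma PB_j_mono y : Mono (fmap PB (j y)).
Proof.
  exact (equalizer_mono (R_equalizer adjB (NA_pres (R_equalizer adjA (NB_pres (j_equalizer y)))))).
Qed.

Local Notation CC := (Comodule DeltaC epsC).
Local Notation DD := (Comodule DeltaD epsD).
Local Notation rC := (p_coact i).
Local Notation sD := (p_coact j).

Lemma rC_counit (M : CC) : fmap RA (epsB (NA (cm_ob M))) ∘ rC M = etaA (cm_ob M).
Proof. exact (p_coact_counit (i := i) (proj2 HC) M). Qed.
Lemma rC_coassoc (M : CC) : tau (RB (NA (cm_ob M))) ∘ rC M = fmap PA (rC M) ∘ rC M.
Proof. exact (p_coact_coassoc (i := i) (proj1 HC) M). Qed.
Lemma sD_counit (N : DD) : fmap RB (epsA (NB (cm_ob N))) ∘ sD N = etaB (cm_ob N).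
Proof. exact (p_coact_counit (i := j) (proj2 HD) N). Qed.
Lemma sD_coassoc (N : DD) :
  fmap RB (fmap NA (tau (cm_ob N))) ∘ sD N = fmap PB (sD N) ∘ sD N.
Proof. exact (p_coact_coassoc (i := j) (proj1 HD) N). Qed.

Lemma etaA_mono x : Mono (etaA x).
Proof. exact (unit_mono HeqA regA (x := x)). Qed.
Lemma etaB_mono y : Mono (etaB y).
Proof. exact (unit_mono HeqB regB (x := y)). Qed.

Section ComodC.
Context {x : A} (r : hom x (PA x)) (Hcu : fmap RA (epsB (NA x)) ∘ r = etaA x)
  (Hca : tau (RB (NA x)) ∘ r = fmap PA r ∘ r).

Lemma comodC_ok : omega_l adjA adjB tau x ∘ r = omega_r adjA adjB x ∘ r.
Proof. unfold omega_l, omega_r. rw Hca. rw (f_equal (fmap PA) Hcu). reflexivity. Qed.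

Definition comodC_of : CC :=
  comodule_of i_mono PA_i_mono etaA_mono (proj1 HC) (proj2 HC)
    (eq_lift_spec (i_equalizer x) comodC_ok) Hcu Hca.

Lemma rC_of : rC comodC_of = r.
Proof. apply eq_lift_spec. Qed.
End ComodC.

Section ComodD.
Context {y : B} (s : hom y (PB y)) (Hcu : fmap RB (epsA (NB y)) ∘ s = etaB y)
  (Hca : fmap RB (fmap NA (tau y)) ∘ s = fmap PB s ∘ s).

Lemma comodD_ok : theta_l adjA adjB tau y ∘ s = theta_r adjA adjB y ∘ s.
Proof.
  unfold theta_l, theta_r. rw Hca. rw (f_equal (fmap RB) (counit_nat adjA (fmap NB s))).
  rw Hcu. rw (eq_sym (unit_nat adjB s)). reflexivity.
Qed.

Definition comodD_of : DD :=
  comodule_of j_mono PB_j_mono etaB_mono (proj1 HD) (proj2 HD)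
    (eq_lift_spec (j_equalizer y) comodD_ok) Hcu Hca.

Lemma sD_of : sD comodD_of = s.
Proof. apply eq_lift_spec. Qed.
End ComodD.

Definition coalgC (M : CC) : hom (NA (cm_ob M)) (NB (RB (NA (cm_ob M)))) := adj_drop (rC M).
Definition coalgD (N : DD) : hom (NB (cm_ob N)) (NA (RA (NB (cm_ob N)))) := adj_drop (sD N).

Lemma lift_coalgC (M : CC) : adj_lift (coalgC M) = rC M.
Proof. apply adj_lift_drop. Qed.
Lemma lift_coalgD (N : DD) : adj_lift (coalgD N) = sD N.
Proof. apply adj_lift_drop. Qed.

(* The coassociativity of the coalgebras comes from the first pre-torsor axiom for
   [C] and from the second one for [D]. *)
Lemma coalgC_coalgebra (M : CC) : IsCoalgebra (coalgC M).
Proof.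
  unfold coalgC, adj_drop. split.
  - rw (eq_sym (counit_nat adjA (epsB (NA (cm_ob M))))).
    rw (f_equal (fmap NA) (rC_counit M)). apply triangle_l.
  - rw (eq_sym (counit_nat adjA
          (fmap NB (fmap RB (epsA (NB (RB (NA (cm_ob M)))) ∘ fmap NA (rC M)))))).
    rw (f_equal (fmap NA) (eq_sym (rC_coassoc M))).
    rw (f_equal (fmap NA) (tau_epsA (RB (NA (cm_ob M))))).
    rw (counit_nat adjA (fmap NB (etaB (RB (NA (cm_ob M)))))). reflexivity.
Qed.

Lemma coalgD_coalgebra (N : DD) : IsCoalgebra (coalgD N).
Proof.
  unfold coalgD, adj_drop. split.
  - rw (eq_sym (counit_nat adjB (epsA (NB (cm_ob N))))).
    rw (f_equal (fmap NB) (sD_counit N)). apply triangle_l.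
  - rw (eq_sym (counit_nat adjB
          (fmap NA (fmap RA (epsB (NA (RA (NB (cm_ob N)))) ∘ fmap NB (sD N)))))).
    rw (f_equal (fmap NB) (eq_sym (sD_coassoc N))).
    rw (f_equal (fun g => fmap NB (fmap RB (fmap NA g))) (tau_epsB (cm_ob N))).
    rw (counit_nat adjB (fmap NA (etaA (RA (NB (cm_ob N)))))). reflexivity.
Qed.

Lemma coalgC_hom (M M' : CC) (f : ComoduleHom M M') :
  IsCoalgHom (coalgC M) (coalgC M') (fmap NA (proj1_sig f)).
Proof. apply coalg_hom_lift. rewrite !lift_coalgC. exact (p_coact_hom i f). Qed.

Lemma coalgD_hom (N N' : DD) (g : ComoduleHom N N') :
  IsCoalgHom (coalgD N) (coalgD N') (fmap NB (proj1_sig g)).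
Proof. apply coalg_hom_lift. rewrite !lift_coalgD. exact (p_coact_hom j g). Qed.

Section FunctorF.
Context (M : CC).
Local Notation x := (cm_ob M).
Local Notation y := (transfer_ob HeqB (coalgC M)).
Local Notation m := (transfer_eq HeqB (coalgC M)).
Local Notation ψ := (transfer_iso HeqB (coalgC M)).
Local Notation μ := (transfer_coalg HeqB NB_pres (coalgC_coalgebra M)).

Definition coactF : hom y (PB y) := adj_lift μ.

Lemma coactF_counit : fmap RB (epsA (NB y)) ∘ coactF = etaB y.
Proof. apply lift_coalg_counit, transfer_coalgebra. Qed.

Lemma tau_transfer_iso :
  fmap PA (fmap RA ψ) ∘ tau y
  = fmap PA (fmap RA (epsB (NA x))) ∘ tau (RB (NA x)) ∘ fmap RA (fmap NB m).
Proof.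
  unfold transfer_iso, descent_iso, adj_drop. rw (eq_sym (tau_nat m)). reflexivity.
Qed.


Lemma coalgC_unit : fmap RA (coalgC M) ∘ etaA x = rC M.
Proof. exact (lift_coalgC M). Qed.

Lemma coactF_coassoc :
  fmap RB (fmap NA (tau y)) ∘ coactF = fmap PB coactF ∘ coactF.
Proof.
  pose proof (transfer_inv_iso HeqB NB_pres (coalgC_coalgebra M)) as Hψ.
  (* After composing with the split mono [PB (RB (NA (RA ψ)))], both sides become
     expressions in [m] and the coaction of [M]. *)
  apply (linv_mono (fmap_linv RB (fmap_linv NA (fmap_linv RA (fmap_linv NB
           (fmap_linv RB (fmap_linv NA (fmap_linv RA Hψ)))))))).
  unfold coactF.
  rw (f_equal (fun g => fmap RB (fmap NA g)) tau_transfer_iso).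
  rw (f_equal (fun g => fmap RB (fmap NA (fmap RA g))) (fmap_transfer_eq HeqB (coalgC M))).
  rw (lift_transfer_coalg HeqB NB_pres (coalgC_coalgebra M)).
  rw (f_equal (fun g => fmap RB (fmap NA g)) coalgC_unit).
  rw (f_equal (fun g => fmap RB (fmap NA g)) (rC_coassoc M)).
  rw (f_equal (fun g => fmap RB (fmap NA (fmap PA g))) (rC_counit M)).
  rw (f_equal (fun g => fmap RB (fmap NA (fmap RA (fmap NB g))))
        (lift_transfer_coalg HeqB NB_pres (coalgC_coalgebra M))).
  rw (f_equal (fun g => fmap RB (fmap NA (fmap RA g))) (fmap_transfer_eq HeqB (coalgC M))).
  rw (lift_transfer_coalg HeqB NB_pres (coalgC_coalgebra M)).
  rw (f_equal (fun g => fmap RB (fmap NA g)) coalgC_unit).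
  reflexivity.
Qed.
End FunctorF.

Section FunctorG.
Context (N : DD).
Local Notation y := (cm_ob N).
Local Notation z := (transfer_ob HeqA (coalgD N)).
Local Notation n := (transfer_eq HeqA (coalgD N)).
Local Notation ψ := (transfer_iso HeqA (coalgD N)).
Local Notation μ := (transfer_coalg HeqA NA_pres (coalgD_coalgebra N)).

Definition coactG : hom z (PA z) := adj_lift μ.

Lemma coactG_counit : fmap RA (epsB (NA z)) ∘ coactG = etaA z.
Proof. apply lift_coalg_counit, transfer_coalgebra. Qed.

Lemma tau_coalgD :
  epsA (NB (RB (NA (RA (NB y))))) ∘ fmap NA (tau y) ∘ coalgD N = fmap NB (sD N).
Proof.
  pose proof (proj1 (coalgD_coalgebra N)) as Hcu. unfold coalgD, adj_drop in *.
  rw (eq_sym (counit_nat adjB (fmap NA (tau y)))). rw (f_equal (fmap NB) (sD_coassoc N)).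
  rw (counit_nat adjB (fmap NA (fmap RA (fmap NB (sD N))))).
  rw (counit_nat adjA (fmap NB (sD N))). rw Hcu. reflexivity.
Qed.

Lemma tau_transfer_eq : tau y ∘ n = fmap RA (fmap NB (sD N)) ∘ n.
Proof.
  rewrite <- tau_coalgD. rw (proj1 (transfer_eq_spec HeqA (coalgD N))).
  rw (eq_sym (unit_nat adjA (tau y))). rw (triangle_r adjA (NB (RB (NA (RA (NB y)))))).
  reflexivity.
Qed.

Lemma coactG_coassoc : tau (RB (NA z)) ∘ coactG = fmap PA coactG ∘ coactG.
Proof.
  pose proof (transfer_inv_iso HeqA NA_pres (coalgD_coalgebra N)) as Hψ.
  (* Same cancellation, with the split mono [PA (RA (NB (RB ψ)))]. *)
  apply (linv_mono (fmap_linv RA (fmap_linv NB (fmap_linv RB (fmap_linv NA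
           (fmap_linv RA (fmap_linv NB (fmap_linv RB Hψ)))))))).
  unfold coactG.
  rw (eq_sym (tau_nat (fmap RB ψ))).
  rw (lift_transfer_coalg HeqA NA_pres (coalgD_coalgebra N)).
  rw (tau_nat (etaB y)). rw tau_transfer_eq.
  rw (f_equal (fun g => fmap RA (fmap NB (fmap RB (fmap NA g))))
        (lift_transfer_coalg HeqA NA_pres (coalgD_coalgebra N))).
  rewrite <- (lift_coalgD N).
  rw (lift_transfer_coalg_eq HeqA NA_pres (coalgD_coalgebra N)).
  reflexivity.
Qed.
End FunctorG.

Definition F_ob (M : CC) : DD := comodD_of (coactF_counit M) (coactF_coassoc M).
Definition G_ob (N : DD) : CC := comodC_of (coactG_counit N) (coactG_coassoc N).

Definition F_hom (M M' : CC) (f : ComoduleHom M M') : ComoduleHom (F_ob M) (F_ob M').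
Proof.
  exists (transfer_map HeqB (coalgC_hom f)).
  apply (comodule_hom_of j_mono). unfold F_ob. rewrite !sD_of.
  apply coalg_hom_lift, transfer_map_hom.
Defined.

Definition G_hom (N N' : DD) (g : ComoduleHom N N') : ComoduleHom (G_ob N) (G_ob N').
Proof.
  exists (transfer_map HeqA (coalgD_hom g)).
  apply (comodule_hom_of i_mono). unfold G_ob. rewrite !rC_of.
  apply coalg_hom_lift, transfer_map_hom.
Defined.

Definition F_functor : Functor (ComoduleCat C DeltaC epsC) (ComoduleCat D DeltaD epsD).
Proof.
  refine (@Build_Functor (ComoduleCat C DeltaC epsC) (ComoduleCat D DeltaD epsD)
            F_ob F_hom _ _).
  - intros M. apply comodule_hom_eq. apply transfer_map_id.
  - intros M1 M2 M3 g f. apply comodule_hom_eq. apply transfer_map_comp.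
Defined.

Definition G_functor : Functor (ComoduleCat D DeltaD epsD) (ComoduleCat C DeltaC epsC).
Proof.
  refine (@Build_Functor (ComoduleCat D DeltaD epsD) (ComoduleCat C DeltaC epsC)
            G_ob G_hom _ _).
  - intros N. apply comodule_hom_eq. apply transfer_map_id.
  - intros N1 N2 N3 g f. apply comodule_hom_eq. apply transfer_map_comp.
Defined.

Lemma coalgD_F_ob (M : CC) :
  coalgD (F_ob M) = transfer_coalg HeqB NB_pres (coalgC_coalgebra M).
Proof. unfold coalgD, F_ob. rewrite sD_of. apply adj_drop_lift. Qed.

Lemma coalgC_G_ob (N : DD) :
  coalgC (G_ob N) = transfer_coalg HeqA NA_pres (coalgD_coalgebra N).
Proof. unfold coalgC, G_ob. rewrite rC_of. apply adj_drop_lift. Qed.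

Definition unit_map (M : CC) : hom (cm_ob M) (cm_ob (G_ob (F_ob M))) :=
  round_trip HeqA NA_pres regA (coalgD_coalgebra (F_ob M)) (coalgD_F_ob M).
Definition unit_inv (M : CC) : hom (cm_ob (G_ob (F_ob M))) (cm_ob M) :=
  round_trip_inv HeqA regA (coalgD_coalgebra (F_ob M)) (coalgD_F_ob M).

Definition counit_inv (N : DD) : hom (cm_ob N) (cm_ob (F_ob (G_ob N))) :=
  round_trip HeqB NB_pres regB (coalgC_coalgebra (G_ob N)) (coalgC_G_ob N).
Definition counit_map (N : DD) : hom (cm_ob (F_ob (G_ob N))) (cm_ob N) :=
  round_trip_inv HeqB regB (coalgC_coalgebra (G_ob N)) (coalgC_G_ob N).

Lemma unit_inv_l M : unit_inv M ∘ unit_map M = idm (cm_ob M).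
Proof. apply round_trip_inv_l. Qed.
Lemma unit_inv_r M : unit_map M ∘ unit_inv M = idm (cm_ob (G_ob (F_ob M))).
Proof. apply round_trip_inv_r. Qed.
Lemma counit_inv_l N : counit_map N ∘ counit_inv N = idm (cm_ob N).
Proof. apply round_trip_inv_l. Qed.
Lemma counit_inv_r N : counit_inv N ∘ counit_map N = idm (cm_ob (F_ob (G_ob N))).
Proof. apply round_trip_inv_r. Qed.

Lemma unit_map_coact (M : CC) :
  cm_coact (G_ob (F_ob M)) ∘ unit_map M = fmap C (unit_map M) ∘ cm_coact M.
Proof.
  apply (comodule_hom_of i_mono). unfold G_ob. rewrite rC_of, <- (lift_coalgC M).
  apply coalg_hom_lift, round_trip_hom.
Qed.

Lemma counit_inv_coact (N : DD) :
  cm_coact (F_ob (G_ob N)) ∘ counit_inv N = fmap D (counit_inv N) ∘ cm_coact N.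
Proof.
  apply (comodule_hom_of j_mono). unfold F_ob. rewrite sD_of, <- (lift_coalgD N).
  apply coalg_hom_lift, round_trip_hom.
Qed.

Definition unit_hom (M : CC) : ComoduleHom M (G_ob (F_ob M)) :=
  exist _ (unit_map M) (unit_map_coact M).
Definition unit_inv_hom (M : CC) : ComoduleHom (G_ob (F_ob M)) M :=
  exist _ (unit_inv M) (comodule_hom_inv (unit_inv_l M) (unit_inv_r M) (unit_map_coact M)).
Definition counit_hom (N : DD) : ComoduleHom (F_ob (G_ob N)) N :=
  exist _ (counit_map N)
    (comodule_hom_inv (counit_inv_l N) (counit_inv_r N) (counit_inv_coact N)).
Definition counit_inv_hom (N : DD) : ComoduleHom N (F_ob (G_ob N)) :=
  exist _ (counit_inv N) (counit_inv_coact N).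

Definition unit_nt : NatTrans (Fid (ComoduleCat C DeltaC epsC)) (Fcomp G_functor F_functor).
Proof.
  refine (@Build_NatTrans _ _ (Fid (ComoduleCat C DeltaC epsC)) (Fcomp G_functor F_functor)
            unit_hom _).
  intros M M' f. apply comodule_hom_eq. symmetry. apply round_trip_natural.
Defined.

Definition counit_nt : NatTrans (Fcomp F_functor G_functor) (Fid (ComoduleCat D DeltaD epsD)).
Proof.
  refine (@Build_NatTrans _ _ (Fcomp F_functor G_functor) (Fid (ComoduleCat D DeltaD epsD))
            counit_hom _).
  intros N N' g. apply comodule_hom_eq. cbn.
  symmetry. apply (iso_natural (counit_inv_r N) (counit_inv_l N')).
  symmetry. apply round_trip_natural.
Defined.

Lemma comodules_equivalent :
  EquivalentCats (ComoduleCat C DeltaC epsC) (ComoduleCat D DeltaD epsD).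
Proof.
  exists F_functor, G_functor, unit_nt, counit_nt. split.
  - intros M. exists (unit_inv_hom M).
    split; apply comodule_hom_eq; [apply unit_inv_l | apply unit_inv_r].
  - intros N. exists (counit_inv_hom N).
    split; apply comodule_hom_eq; [apply counit_inv_r | apply counit_inv_l].
Qed.
End ComodulesOfPreTorsor.

Theorem mainTheorem4 (A B T : Category)
  (HeqA : HasEqualizers A) (HeqB : HasEqualizers B)
  (adjA : Adjunction A T) (adjB : Adjunction B T)
  (tau : TauType adjA adjB) (Htau : IsRegularPreTorsor adjA adjB tau)
  (C : Functor A A) (i : NatTrans C (PhiA adjA adjB))
  (Hi : IsEqualizerNT i (omega_l adjA adjB tau) (omega_r adjA adjB))
  (DeltaC : NatTrans C (Fcomp C C)) (epsC : NatTrans C (Fid A))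
  (HC : ComonadDataC adjA adjB tau i DeltaC epsC)
  (D : Functor B B) (j : NatTrans D (PhiB adjA adjB))
  (Hj : IsEqualizerNT j (theta_l adjA adjB tau) (theta_r adjA adjB))
  (DeltaD : NatTrans D (Fcomp D D)) (epsD : NatTrans D (Fid B))
  (HD : ComonadDataD adjA adjB tau j DeltaD epsD) :
  EquivalentCats (ComoduleCat C DeltaC epsC) (ComoduleCat D DeltaD epsD).
Proof. exact (comodules_equivalent HeqA HeqB Htau Hi HC Hj HD). Qed.
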